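(* For any $u\le\beta$, the relative cycles $(C_c)_{c\in J_{u,\beta}}$ form a $\mathbb Z$-basis of $\Lambda_{u,\beta}=H_1(\mathbf S_{u,\beta},\mathbb M;\mathbb Z)$.
   Context: Notation: $n\ge2$, $I=\{1,\dots,n-1\}$, $\pm I=I\sqcup(-I)$; permutations composed as functions, $s_i=(i\ i+1)$, Bruhat order $\le$, Demazure product $*$. Double braid word $\beta=(i_1,\dots,i_m)\in(\pm I)^m$; $s_i^+=s_i,s_i^-=\mathrm{id}$ if $i>0$, $s_i^+=\mathrm{id},s_i^-=s_{-i}$ if $i<0$; $u\le\beta$ means $u\le s^-_{i_m}*\dots*s^-_{i_1}*s^+_{i_1}*\dots*s^+_{i_m}$. $s_i\rhd u=s_iu$ if $s_iu<u$ else $u$; $u\lhd s_i=us_i$ if $us_i<u$ else $u$; identity acts trivially. $u_{(m)}=u$, $u_{(c-1)}=s^-_{i_c}\rhd u_{(c)}\lhd s^+_{i_c}$; $J_{u,\beta}=\{c:u_{(c)}=u_{(c-1)}\}$ (solid), others hollow. Graph $G_{u,\beta}$ in $\mathbb R^3$ ($(i,j,t)$): dots $(i,u_{(c)}(i),c)$; strands time $c-1\to c$: unchanged if $c$ solid; rows $j,j+1$ swapped if $c$ hollow with $i_c=j>0$; columns $i,i+1$ swapped if hollow with $i_c=-i$. Solid $c$ with $i_c=j>0$, dots $(i,j),(i',j+1)$ ($i<i'$): black $p$ on the strand through $(i,j)$, white $q$ on that through $(i',j+1)$ at time $c-\frac12$, bridge $b_c=pq$; solid $c$ with $i_c=-i$,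 dots $(i,j),(i+1,j')$ ($j<j'$): white $p$ through $(i,j)$, black $q$ through $(i+1,j')$. Start $p$, end $q$. Vertices: bridge endpoints and strand ends at $t=0,m$; edges: bridges and strand pieces. Cyclic orders counterclockwise at white, clockwise at black vertices, in the projection $(i,j,t)\mapsto(t,j)$. $\mathbf S_{u,\beta}$: thickened oriented surface; $\mathbb M$: $n$ marked boundary points from the time-$0$ ends. Relative cycles: monotone curves in $\Gamma(z)=\{(i,z(i))\}$ (strictly increasing coordinates, dot endpoints, no other dots), multicurves ordered componentwise. For $c\in J$, $\gamma^{c,c-1}$ joins the two dots on the strands of $b_c$; from $r$ to $r-1$: hollow $r$: continuous deformation keeping dots on the same side as their strand-mates; solid $r$ with $i_r=j>0$: with $D,D'$ the dots in rows $j,j+1$, delete the part strictly between $D,D'$ of each curve passing weakly above $D$ and weakly below $D'$; solid $r$ with $i_r=-i$: $D,D'$ in columns $i,i+1$, same for curves weakly right of $D$ and weakly left of $D'$. These sweep, with $b_c$, a disk $D_c$ whose boundary consists of edges of $G_{u,\beta}$ and $\gamma^{c,0}$. $C_c=\partial D_c\setminus\gamma^{c,0}$ (a cycle or a union of paths ending at marked points), oriented so $b_c$ runs from start to end, viewed in $\Lambda_{u,\beta}$. *)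

From HB Require Import structures.
From mathcomp Require Import all_boot all_order all_fingroup all_algebra.
Set Implicit Arguments.
Unset Strict Implicit.
Unset Printing Implicit Defensive.
Import GRing.Theory Num.Theory.

(* Conventions:
   - points / columns / rows are 0-based: 'I_n ; the paper's s_k (k in 1..n-1)
     is tperm (k-1) k ;
   - the paper's product "u v" is mathcomp's (u * v)%g, i.e. (u*v) x = v (u x);
     this is the only reading under which the algebraic recursion for u_(c)
     matches the geometric description of G_{u,beta} (positive letters swap
     rows, negative letters swap columns);
   - dots at time t are (i, u_(t) i) for columns i : 'I_n. *)

Local Open Scope ring_scope.

Section Defs.
Variable n : nat.

Definition perm_len (w : {perm 'I_n}) : nat :=
  #|[set p : 'I_n * 'I_n | (p.1 < p.2)%N && (w p.2 < w p.1)%N]|.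

Definition bruhat_step (x y : {perm 'I_n}) : bool :=
  [exists a : 'I_n, exists b : 'I_n, (a != b) && (y == (x * tperm a b)%g)]
  && (perm_len x < perm_len y)%N.
Definition bruhat_le (x y : {perm 'I_n}) : bool := connect bruhat_step x y.
Definition bruhat_lt (x y : {perm 'I_n}) : bool := (x != y) && bruhat_le x y.

Definition sref (k : nat) : {perm 'I_n} :=
  match (insub k.-1 : option 'I_n), (insub k : option 'I_n) with
  | Some a, Some b => if (0 < k)%N then tperm a b else 1%g
  | _, _ => 1%g
  end.

Definition valid_letter (x : int) : bool := (x != 0) && (absz x < n)%N.

Definition plus_refl (x : int) : {perm 'I_n} := if 0 < x then sref (absz x) else 1%g.
Definition minus_refl (x : int) : {perm 'I_n} := if x < 0 then sref (absz x) else 1%g.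

Definition dem (w s : {perm 'I_n}) : {perm 'I_n} :=
  if bruhat_lt w (w * s)%g then (w * s)%g else w.
Definition demazure (l : seq {perm 'I_n}) : {perm 'I_n} := foldl dem 1%g l.

Definition demazure_beta (beta : seq int) : {perm 'I_n} :=
  demazure (map minus_refl (rev beta) ++ map plus_refl beta).

Definition u_le_beta (u : {perm 'I_n}) (beta : seq int) : bool :=
  bruhat_le u (demazure_beta beta).

Definition ldesc (s w : {perm 'I_n}) : {perm 'I_n} :=
  if bruhat_lt (s * w)%g w then (s * w)%g else w.
Definition rdesc (w s : {perm 'I_n}) : {perm 'I_n} :=
  if bruhat_lt (w * s)%g w then (w * s)%g else w.

Definition ustep (x : int) (w : {perm 'I_n}) : {perm 'I_n} :=
  ldesc (minus_refl x) (rdesc w (plus_refl x)).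

Variable u : {perm 'I_n}.
Variable beta : seq int.

Definition m := size beta.

Definition uat (c : nat) : {perm 'I_n} := foldr ustep u (drop c beta).

(* c-th letter, 1-based *)
Definition letter (c : nat) : int := nth 0 beta c.-1.

(* c is solid, i.e. c \in J_{u,beta} *)
Definition solid (c : nat) : bool := (1 <= c <= m)%N && (uat c == uat c.-1).

(* strand piece (c, x) (top dot: column x at time c) has its lower end at
   column sigma c x at time c-1 *)
Definition sigma (c : nat) (x : 'I_n) : 'I_n :=
  if (~~ solid c) && (letter c < 0) then sref (absz (letter c)) x else x.

(* columns (at time c) of the start and end of the bridge b_c (c solid);
   these are also the columns of the dots D, D' used in the sweep at step c *)
Definition bridge_ends (c : nat) : option ('I_n * 'I_n) :=
  let x := letter c in
  let z := uat c in
  match (insub (absz x).-1 : option 'I_n), (insub (absz x) : option 'I_n) with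
  | Some r1, Some r2 =>
      if 0 < x then Some (((z^-1)%g r1), ((z^-1)%g r2)) else Some (r1, r2)
  | _, _ => None
  end.

(* Edges: ELow c x : lower half of strand piece (c,x), from dot (c-1, sigma c x)
          to the midpoint mid(c,x) (time c-1/2);
          EUp c x  : upper half, from mid(c,x) to dot (c, x);
          EBr c    : bridge b_c, from its start to its end (c solid).
   Strand edges are oriented upward in time. *)
Inductive edge := ELow of nat & 'I_n | EUp of nat & 'I_n | EBr of nat.

Record chain := Chain {
  clow : nat -> 'I_n -> int;
  cupp : nat -> 'I_n -> int;
  cbr  : nat -> int }.

Definition zero_chain : chain := Chain (fun _ _ => 0) (fun _ _ => 0) (fun _ => 0).

Definition chain_eq (f g : chain) : Prop :=
  [/\ forall c x, clow f c x = clow g c x,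
      forall c x, cupp f c x = cupp g c x
    & forall c, cbr f c = cbr g c].

(* boundary contribution of the bridge at the midpoint vertex mid(c,x) *)
Definition bterm (f : chain) (c : nat) (x : 'I_n) : int :=
  match bridge_ends c with
  | Some (p, q) =>
      if solid c then (if x == q then cbr f c else 0) - (if x == p then cbr f c else 0)
      else 0
  | None => 0
  end.

(* relative 1-cycles of (G, {strand ends at time 0}): chains supported on
   actual edges whose boundary vanishes at every unmarked vertex.  Since G is
   a graph (no 2-cells), these form H_1(G, M) = H_1(S_{u,beta}, M; Z). *)
Definition relcyc (f : chain) : Prop :=
  [/\ forall c x, ~~ (1 <= c <= m)%N -> clow f c x = 0,
      forall c x, ~~ (1 <= c <= m)%N -> cupp f c x = 0,
      forall c, ~~ solid c -> cbr f c = 0,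
      (* dot vertices at times 1..m *)
      forall t x, (1 <= t <= m)%N ->
        cupp f t x = (if (t < m)%N then clow f t.+1 (sigma t.+1 x) else 0)
    & (* midpoint vertices (bridge endpoints) *)
      forall c x, (1 <= c <= m)%N -> clow f c x - cupp f c x + bterm f c x = 0].

(* A monotone curve in Gamma(z) from the dot in column cst to the dot in column
   cen (cst < cen, z cst < z cen), up to isotopy rel dots: cset = set of columns
   of the dots strictly inside its bounding box lying on its upper-left side. *)
Record curve := Curve { cst : 'I_n; cen : 'I_n; cset : {set 'I_n} }.

Definition isUL (z : {perm 'I_n}) (g : curve) (x : 'I_n) : bool :=
  if (x < cst g)%N then true
  else if (cen g < x)%N then false
  else if (z x < z (cst g))%N then false
  else if (z (cen g) < z x)%N then true
  else x \in cset g.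

(* solid step c: test whether the curve passes weakly above D and weakly below
   D' (positive letter), resp. weakly right of D and weakly left of D'
   (negative letter); if so, return the pieces left after deleting the part
   strictly between D and D' (degenerate one-point pieces dropped). *)
Definition cut (c : nat) (g : curve) : option (seq curve) :=
  let z := uat c in
  match bridge_ends c with
  | Some (d, d') =>
      let cond :=
        if 0 < letter c then
          [&& (z (cst g) <= z d)%N, (z d' <= z (cen g))%N,
              (d == cst g) || ~~ isUL z g d & (d' == cen g) || isUL z g d']
        else
          [&& (cst g <= d)%N, (d' <= cen g)%N,
              (d == cst g) || isUL z g d & (d' == cen g) || ~~ isUL z g d'] in
      if cond then
        Some ((if d != cst g then [:: Curve (cst g) d (cset g)] else [::]) ++
              (if d' != cen g then [:: Curve d' (cen g) (cset g)] else [::]))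
      else None
  | None => None
  end.

(* hollow step c: continuous deformation keeping each dot on the same side as
   its strand-mate *)
Definition deform (c : nat) (g : curve) : curve :=
  let z := uat c in
  if 0 < letter c then Curve (cst g) (cen g) [set y | isUL z g y]
  else let s := sref (absz (letter c)) in
       Curve (s (cst g)) (s (cen g)) [set y | isUL z g (s y)].

(* one step from time c to time c-1 for a single curve: new curves and the
   edge contributions to the boundary of the swept disk (lower-left endpoint
   trajectories counted +1, upper-right ones -1, deleted segments give the
   bridge with coefficient -1) *)
Definition stepc (c : nat) (g : curve) : seq curve * seq (edge * int) :=
  let up := [:: (EUp c (cst g), 1); (EUp c (cen g), -1)] in
  if solid c then
    let ps := if cut c g is Some ps then ps else [:: g] in
    let br := if cut c g is Some _ then [:: (EBr c, -1)] else [::] in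
    (ps, up ++ br ++ flatten [seq [:: (ELow c (cst h), 1); (ELow c (cen h), -1)] | h <- ps])
  else ([:: deform c g], up ++ [:: (ELow c (cst g), 1); (ELow c (cen g), -1)]).

Definition stepall (c : nat) (cs : seq curve) : seq curve * seq (edge * int) :=
  (flatten [seq (stepc c g).1 | g <- cs], flatten [seq (stepc c g).2 | g <- cs]).

Fixpoint sweep (r : nat) (cs : seq curve) : seq (edge * int) :=
  match r with
  | 0 => [::]
  | r'.+1 => (stepall r'.+1 cs).2 ++ sweep r' (stepall r'.+1 cs).1
  end.

Definition Ccontrib (c : nat) : seq (edge * int) :=
  if solid c then
    match bridge_ends c with
    | Some (p, q) =>
        [:: (EBr c, 1); (ELow c p, 1); (ELow c q, -1)] ++ sweep c.-1 [:: Curve p q set0]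
    | None => [::]
    end
  else [::].

Definition of_contrib (l : seq (edge * int)) : chain :=
  Chain
    (fun c x => \sum_(e <- l)
        match e.1 with ELow c' x' => if (c' == c) && (x' == x) then e.2 else 0 | _ => 0 end)
    (fun c x => \sum_(e <- l)
        match e.1 with EUp c' x' => if (c' == c) && (x' == x) then e.2 else 0 | _ => 0 end)
    (fun c => \sum_(e <- l)
        match e.1 with EBr c' => if c' == c then e.2 else 0 | _ => 0 end).

Definition Ccyc (c : nat) : chain := of_contrib (Ccontrib c).

Definition lincomb (a : nat -> int) : chain :=
  Chain
    (fun c' x => \sum_(1 <= c < m.+1 | solid c) a c * clow (Ccyc c) c' x)
    (fun c' x => \sum_(1 <= c < m.+1 | solid c) a c * cupp (Ccyc c) c' x)
    (fun c' => \sum_(1 <= c < m.+1 | solid c) a c * cbr (Ccyc c) c').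

End Defs.

From HB Require Import structures.
From mathcomp Require Import all_boot all_order all_fingroup all_algebra ring zify.
Set Implicit Arguments. Unset Strict Implicit. Unset Printing Implicit Defensive.
Import Order.TTheory GRing.Theory Num.Theory.
Local Open Scope ring_scope.

(* The graph G_{u,beta} has no 2-cells, so its relative 1-cycles are exactly the chains
   satisfying the balance conditions of [relcyc].  Reading these conditions from time m
   downwards, a relative cycle with zero coefficient on every bridge vanishes: the top
   ends of the strands are unmarked, and at each dot and midpoint the coefficient just
   propagates.  The chain C_c has coefficient 1 on b_c and 0 on every bridge b_t with
   t > c, because the sweep producing it only visits times < c.  Subtracting multiples
   of C_c for the largest bridge with a nonzero coefficient therefore expresses every
   relative cycle in the C_c, and the same triangularity gives their independence.
   That C_c is a cycle at all comes from the telescoping of the sweep: the endpoint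
   trajectories of the curves at step r end where those of step r - 1 begin. *)

Section Sweep.
Variables (n : nat) (u : {perm 'I_n}) (beta : seq int).
Hypothesis hbeta : all (valid_letter n) beta.
Implicit Types (l : seq (edge n * int)) (c r t : nat) (x : 'I_n) (g : curve n)
  (cs : seq (curve n)).

Local Notation solid := (solid u beta).
Local Notation sigma := (sigma u beta).
Local Notation stepc := (stepc u beta).
Local Notation stepall := (stepall u beta).
Local Notation sweep := (sweep u beta).
Local Notation Ccyc := (Ccyc u beta).

#[local] Arguments clow : simpl never.
#[local] Arguments cupp : simpl never.
#[local] Arguments cbr : simpl never.

Lemma clow_nil t x : clow (of_contrib [::]) t x = 0. Proof. exact: big_nil. Qed.
Lemma cupp_nil t x : cupp (of_contrib [::]) t x = 0. Proof. exact: big_nil. Qed.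
Lemma cbr_nil t : cbr (of_contrib ([::] : seq (edge n * int))) t = 0.
Proof. exact: big_nil. Qed.

Lemma clow_cons e l t x : clow (of_contrib (e :: l)) t x =
  match e.1 with ELow c y => if (c == t) && (y == x) then e.2 else 0 | _ => 0 end
  + clow (of_contrib l) t x.
Proof. exact: big_cons. Qed.
Lemma cupp_cons e l t x : cupp (of_contrib (e :: l)) t x =
  match e.1 with EUp c y => if (c == t) && (y == x) then e.2 else 0 | _ => 0 end
  + cupp (of_contrib l) t x.
Proof. exact: big_cons. Qed.
Lemma cbr_cons e l t : cbr (of_contrib (e :: l)) t =
  match e.1 with EBr c => if c == t then e.2 else 0 | _ => 0 end + cbr (of_contrib l) t.
Proof. exact: big_cons. Qed.

Lemma clow_cat l1 l2 t x :
  clow (of_contrib (l1 ++ l2)) t x = clow (of_contrib l1) t x + clow (of_contrib l2) t x.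
Proof. exact: big_cat. Qed.
Lemma cupp_cat l1 l2 t x :
  cupp (of_contrib (l1 ++ l2)) t x = cupp (of_contrib l1) t x + cupp (of_contrib l2) t x.
Proof. exact: big_cat. Qed.
Lemma cbr_cat l1 l2 t :
  cbr (of_contrib (l1 ++ l2)) t = cbr (of_contrib l1) t + cbr (of_contrib l2) t.
Proof. exact: big_cat. Qed.

Definition curves_bd (cs : seq (curve n)) x : int :=
  \sum_(g <- cs) ((cst g == x)%:R - (cen g == x)%:R).

Definition low_edges c (cs : seq (curve n)) : seq (edge n * int) :=
  flatten [seq [:: (ELow c (cst g), 1%:Z); (ELow c (cen g), -1)] | g <- cs].

Lemma clow_low_edges c cs t x :
  clow (of_contrib (low_edges c cs)) t x = if c == t then curves_bd cs x else 0.
Proof.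
elim: cs => [|g cs IH]; first by rewrite clow_nil /curves_bd big_nil if_same.
rewrite /= !clow_cons -/(low_edges c cs) IH /curves_bd big_cons /=.
by case: (c == t) => //=; case: (cst g == x); case: (cen g == x) => /=; ring.
Qed.

Lemma cupp_low_edges c cs t x : cupp (of_contrib (low_edges c cs)) t x = 0.
Proof.
elim: cs => [|g cs IH]; first exact: cupp_nil.
by rewrite /= !cupp_cons -/(low_edges c cs) IH /= !add0r.
Qed.

Lemma cbr_low_edges c cs t : cbr (of_contrib (low_edges c cs)) t = 0.
Proof.
elim: cs => [|g cs IH]; first exact: cbr_nil.
by rewrite /= !cbr_cons -/(low_edges c cs) IH /= !add0r.
Qed.

Definition bcoef c x : int :=
  if bridge_ends u beta c is Some (p, q) then
    if solid c then (x == q)%:R - (x == p)%:R else 0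
  else 0.

Lemma btermE f c x : bterm u beta f c x = cbr f c * bcoef c x.
Proof.
rewrite /bterm /bcoef; case: bridge_ends => [[p q]|]; last by rewrite mulr0.
case: solid; last by rewrite mulr0.
by rewrite mulrBr; case: eqP; case: eqP => _ _; rewrite ?mulr1 ?mulr0.
Qed.

Lemma solid_range c : solid c -> (1 <= c <= m beta)%N.
Proof. by case/andP. Qed.

Lemma sref0 : sref n 0 = 1%g.
Proof. by rewrite /sref; case: (insub _) => [a|] //; case: (insub _). Qed.

Lemma srefK k : involutive (sref n k).
Proof.
move=> x; rewrite /sref; case: (insub k.-1) => [a|]; last by rewrite !perm1.
case: (insub k) => [b|]; last by rewrite !perm1.
by case: ifP => _; rewrite ?tpermK ?perm1.
Qed.

Lemma sigmaK c : involutive (sigma c).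
Proof. by move=> x; rewrite /sigma; case: (~~ solid c && _); rewrite ?srefK. Qed.

Lemma sigma_solid c x : solid c -> sigma c x = x.
Proof. by rewrite /sigma => ->. Qed.

Lemma deform_ends c g x : ~~ solid c ->
  (cst (deform u beta c g) == sigma c x) = (cst g == x) /\
  (cen (deform u beta c g) == sigma c x) = (cen g == x).
Proof.
rewrite /deform /sigma => /negPf -> /=.
case: (ltgtP (letter beta c) 0) => [_|_|->] //=.
- by rewrite !(inj_eq perm_inj).
- by rewrite sref0 !perm1.
Qed.

Lemma cutP c g : cut u beta c g = None \/ exists d d',
  bridge_ends u beta c = Some (d, d') /\
  cut u beta c g = Some ((if d != cst g then [:: Curve (cst g) d (cset g)] else [::]) ++
                         (if d' != cen g then [:: Curve d' (cen g) (cset g)] else [::])).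
Proof.
rewrite /cut; case: bridge_ends => [[d d']|]; last by left.
by case: ifP => _; [right; exists d, d' | left].
Qed.

Lemma stepc_clow c g t x : clow (of_contrib (stepc c g).2) t x =
  if c == t then curves_bd (stepc c g).1 (sigma c x) else 0.
Proof.
rewrite /stepc; case: ifP => hs /=.
  rewrite sigma_solid // !clow_cons /=; case: (cut u beta c g) => [ps|] /=.
    by rewrite clow_cons -/(low_edges c ps) clow_low_edges /= !add0r.
  rewrite !clow_cons clow_nil /curves_bd big_seq1 /= !add0r.
  by case: (c == t) => //=; case: (cst g == x); case: (cen g == x) => /=; ring.
have [e1 e2] := deform_ends g x (negbT hs).
rewrite !clow_cons clow_nil /curves_bd big_seq1 /= !add0r e1 e2.
by case: (c == t) => //=; case: (cst g == x); case: (cen g == x) => /=; ring.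
Qed.

Lemma stepc_cupp c g t x :
  cupp (of_contrib (stepc c g).2) t x = if c == t then curves_bd [:: g] x else 0.
Proof.
rewrite /curves_bd big_seq1 /stepc.
have up l : cupp (of_contrib [:: (EUp c (cst g), 1), (EUp c (cen g), -1) & l]) t x
    = (if c == t then (cst g == x)%:R - (cen g == x)%:R else 0) + cupp (of_contrib l) t x.
  rewrite !cupp_cons /=.
  by case: (c == t) => //=; case: (cst g == x); case: (cen g == x) => /=; ring.
case: ifP => _ /=; last by rewrite up !cupp_cons cupp_nil /= !addr0.
case: (cut u beta c g) => [ps|] /=; last by rewrite up !cupp_cons cupp_nil /= !addr0.
by rewrite up cupp_cons -/(low_edges c ps) cupp_low_edges /= !addr0.
Qed.

Lemma stepc_cbr c g t : (c != t) || ~~ solid c -> cbr (of_contrib (stepc c g).2) t = 0.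
Proof.
rewrite /stepc; case: ifP => hs /= h; last by rewrite !cbr_cons cbr_nil /= !addr0.
rewrite orbF in h; rewrite !cbr_cons /=.
case: (cut u beta c g) => [ps|] /=; last by rewrite !cbr_cons cbr_nil.
by rewrite cbr_cons -/(low_edges c ps) cbr_low_edges /= (negbTE h).
Qed.

(* The bridge term cancels the two endpoints D, D' created by the cut. *)
Lemma stepc_balance c g x :
  clow (of_contrib (stepc c g).2) c x - cupp (of_contrib (stepc c g).2) c x
  + cbr (of_contrib (stepc c g).2) c * bcoef c x = 0.
Proof.
rewrite stepc_clow stepc_cupp eqxx /curves_bd big_seq1.
rewrite /stepc; case: ifP => hs /=; last first.
  have [e1 e2] := deform_ends g x (negbT hs).
  rewrite !cbr_cons cbr_nil big_seq1 /= e1 e2 !addr0 mul0r addr0.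
  by case: (cst g == x); case: (cen g == x) => /=; ring.
rewrite sigma_solid //.
have [e|[d [d' [eb e]]]] := cutP c g; rewrite e /=.
  rewrite !cbr_cons cbr_nil big_seq1 /= !addr0 mul0r addr0.
  by case: (cst g == x); case: (cen g == x) => /=; ring.
rewrite !cbr_cons -/(low_edges c _) cbr_low_edges /= eqxx /bcoef eb hs big_cat /= !addr0.
case: (d =P cst g) => [->|_]; case: (d' =P cen g) => [->|_] /=;
  rewrite ?big_nil ?big_cons ?big_nil /= ?addr0 ?add0r ?[x == _]eq_sym;
  case: (cst g == x); case: (cen g == x); try case: (d == x); try case: (d' == x);
  rewrite /=; ring.
Qed.

Lemma stepall_clow c cs t x : clow (of_contrib (stepall c cs).2) t x =
  if c == t then curves_bd (stepall c cs).1 (sigma c x) else 0.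
Proof.
elim: cs => [|g cs IH] /=; first by rewrite clow_nil /curves_bd big_nil if_same.
by rewrite clow_cat stepc_clow IH /curves_bd big_cat; case: (c == t); rewrite ?addr0.
Qed.

Lemma stepall_cupp c cs t x :
  cupp (of_contrib (stepall c cs).2) t x = if c == t then curves_bd cs x else 0.
Proof.
elim: cs => [|g cs IH] /=; first by rewrite cupp_nil /curves_bd big_nil if_same.
rewrite cupp_cat stepc_cupp IH /curves_bd big_seq1 big_cons.
by case: (c == t); rewrite ?addr0.
Qed.

Lemma stepall_cbr c cs t : (c != t) || ~~ solid c -> cbr (of_contrib (stepall c cs).2) t = 0.
Proof.
move=> h; elim: cs => [|g cs IH] /=; first exact: cbr_nil.
by rewrite cbr_cat stepc_cbr // IH addr0.
Qed.

Lemma stepall_balance c cs x :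
  clow (of_contrib (stepall c cs).2) c x - cupp (of_contrib (stepall c cs).2) c x
  + cbr (of_contrib (stepall c cs).2) c * bcoef c x = 0.
Proof.
elim: cs => [|g cs IH] /=; first by rewrite clow_nil cupp_nil cbr_nil mul0r !addr0.
rewrite clow_cat cupp_cat cbr_cat mulrDl -[RHS](addr0 0) -{1}(stepc_balance c g x) -IH.
ring.
Qed.

Lemma sweepS r cs : sweep r.+1 cs = (stepall r.+1 cs).2 ++ sweep r (stepall r.+1 cs).1.
Proof. by []. Qed.

Lemma sweep_outside r cs t x : (t == 0)%N || (r < t)%N ->
  clow (of_contrib (sweep r cs)) t x = 0 /\ cupp (of_contrib (sweep r cs)) t x = 0.
Proof.
elim: r cs => [|r IH] cs ht; first by rewrite clow_nil cupp_nil.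
rewrite sweepS clow_cat cupp_cat stepall_clow stepall_cupp.
have [-> ->] := IH (stepall r.+1 cs).1 (ltac:(lia)).
by have -> : (r.+1 == t) = false by lia.
Qed.

Lemma sweep_cbr r cs t : (r < t)%N || ~~ solid t -> cbr (of_contrib (sweep r cs)) t = 0.
Proof.
elim: r cs => [|r IH] cs ht; first exact: cbr_nil.
rewrite sweepS cbr_cat IH; last by case/orP: ht => [/ltnW|] ->; rewrite ?orbT.
rewrite stepall_cbr ?addr0 //.
case: (eqVneq r.+1 t) => [et|//]; subst t.
by rewrite ltnn /= in ht; rewrite ht orbT.
Qed.

Lemma sweep_top r cs x : (0 < r)%N -> cupp (of_contrib (sweep r cs)) r x = curves_bd cs x.
Proof.
case: r => [|r] // _.
rewrite sweepS cupp_cat stepall_cupp eqxx.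
by have [_ ->] := @sweep_outside r (stepall r.+1 cs).1 r.+1 x (ltac:(lia)); rewrite addr0.
Qed.

Lemma sweep_dot r cs t x : (1 <= t < r)%N ->
  cupp (of_contrib (sweep r cs)) t x = clow (of_contrib (sweep r cs)) t.+1 (sigma t.+1 x).
Proof.
elim: r cs => [|r IH] cs ht; first lia.
rewrite sweepS cupp_cat clow_cat stepall_cupp stepall_clow.
have -> : (r.+1 == t) = false by lia.
case: (ltnP t r) => htr.
  have -> : (r.+1 == t.+1) = false by lia.
  by rewrite !add0r IH //; lia.
have -> : t = r by lia.
rewrite eqxx sigmaK add0r sweep_top; last lia.
have [-> _] := @sweep_outside r (stepall r.+1 cs).1 r.+1 (sigma r.+1 x) (ltac:(lia)).
by rewrite addr0.
Qed.

Lemma sweep_balance r cs t x : (1 <= t <= r)%N ->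
  clow (of_contrib (sweep r cs)) t x - cupp (of_contrib (sweep r cs)) t x
  + cbr (of_contrib (sweep r cs)) t * bcoef t x = 0.
Proof.
elim: r cs => [|r IH] cs ht; first lia.
rewrite sweepS clow_cat cupp_cat cbr_cat.
case: (ltnP r t) => htr.
  have -> : t = r.+1 by lia.
  have [-> ->] := @sweep_outside r (stepall r.+1 cs).1 r.+1 x (ltac:(lia)).
  by rewrite sweep_cbr ?ltnSn // !addr0 stepall_balance.
rewrite stepall_clow stepall_cupp stepall_cbr; last by apply/orP; left; lia.
have -> : (r.+1 == t) = false by lia.
by rewrite !add0r IH //; lia.
Qed.

Lemma bridge_endsP c : solid c -> exists p q, bridge_ends u beta c = Some (p, q).
Proof.
move=> /solid_range /andP [c_gt0 c_le_m].
have /andP [_ l_lt_n] : valid_letter n (letter beta c).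
  by apply: (allP hbeta); rewrite /letter mem_nth //; case: c c_gt0 c_le_m.
rewrite /bridge_ends.
case: insubP => [a _ _|/negP []]; last lia.
case: insubP => [b _ _|/negP []]; last by [].
by case: ifP => _; do 2 eexists.
Qed.

Lemma CcycE c p q : solid c -> bridge_ends u beta c = Some (p, q) ->
  Ccyc c = of_contrib [:: (EBr n c, 1), (ELow c p, 1), (ELow c q, -1)
                        & sweep c.-1 [:: Curve p q set0]].
Proof. by move=> hs eb; rewrite /Ccyc /Ccontrib hs eb. Qed.

Lemma Ccyc_cbr c t : solid c -> (c <= t)%N -> cbr (Ccyc c) t = (c == t)%:R.
Proof.
move=> hs hct; have [p [q eb]] := bridge_endsP hs; have := solid_range hs => /andP [c_gt0 _].
rewrite (CcycE hs eb) !cbr_cons /= sweep_cbr; last by apply/orP; left; lia.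
by case: (c == t); rewrite !addr0.
Qed.

Lemma Ccyc_relcyc c : solid c -> relcyc u beta (Ccyc c).
Proof.
move=> hs; have [p [q eb]] := bridge_endsP hs; have /andP [c_gt0 c_le_m] := solid_range hs.
have out t x : (t == 0)%N || (c <= t)%N ->
    clow (of_contrib (sweep c.-1 [:: Curve p q set0])) t x = 0
    /\ cupp (of_contrib (sweep c.-1 [:: Curve p q set0])) t x = 0.
  by move=> ht; apply: sweep_outside; lia.
rewrite (CcycE hs eb); split.
- move=> t x ht; rewrite !clow_cons /=; have -> : (c == t) = false by lia.
  by have [-> _] := out t x (ltac:(lia)).
- by move=> t x ht; rewrite !cupp_cons /=; have [_ ->] := out t x (ltac:(lia)).
- move=> t ht; rewrite !cbr_cons /= sweep_cbr ?ht ?orbT //.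
  by have -> : (c == t) = false by apply: contraNF ht => /eqP <-.
- move=> t x ht; rewrite !cupp_cons !clow_cons /= !add0r.
  case: (ltngtP t.+1 c) => [lt_tc|lt_ct|tc]; last subst c.
  + have -> : (t < m beta)%N by lia.
    by rewrite /= !add0r sweep_dot //; lia.
  + have [_ ->] := out t x (ltac:(lia)).
    case: ifP => // _; have [-> _] := out t.+1 (sigma t.+1 x) (ltac:(lia)).
    by rewrite /= !addr0.
  + have -> : (t < m beta)%N by lia.
    rewrite /= sweep_top; last lia.
    rewrite sigma_solid // /curves_bd big_seq1 /=.
    have [-> _] := out t.+1 x (ltac:(lia)).
    by rewrite addr0; case: (p == x); case: (q == x).
- move=> t x ht; rewrite btermE !cupp_cons !clow_cons !cbr_cons /= !add0r.
  case: (ltnP t c) => [lt_tc|le_ct].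
    have -> : (c == t) = false by lia.
    by rewrite /= !add0r sweep_balance //; lia.
  have [-> ->] := out t x (ltac:(lia)).
  rewrite sweep_cbr; last by apply/orP; left; lia.
  case: eqP => [<-|_]; last by rewrite !addr0 mul0r.
  rewrite /bcoef eb hs ![x == _]eq_sym.
  by case: (p == x); case: (q == x) => /=; ring.
Qed.

End Sweep.

Section Basis.
Variables (n : nat) (u : {perm 'I_n}) (beta : seq int).
Hypothesis hbeta : all (valid_letter n) beta.
Implicit Types (f g : chain n) (a : nat -> int) (c t : nat) (x : 'I_n).

Local Notation solid := (solid u beta).
Local Notation relcyc := (relcyc u beta).
Local Notation Ccyc := (Ccyc u beta).
Local Notation lincomb := (lincomb u beta).

Definition chain_subZ f b g : chain n :=
  Chain (fun c x => clow f c x - b * clow g c x) (fun c x => cupp f c x - b * cupp g c x)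
        (fun c => cbr f c - b * cbr g c).

Lemma relcyc_subZ f b g : relcyc f -> relcyc g -> relcyc (chain_subZ f b g).
Proof.
case=> [f1 f2 f3 f4 f5] [g1 g2 g3 g4 g5]; split => /=.
- by move=> c x h; rewrite f1 // g1 // mulr0 subr0.
- by move=> c x h; rewrite f2 // g2 // mulr0 subr0.
- by move=> c h; rewrite f3 // g3 // mulr0 subr0.
- by move=> t x h; rewrite f4 // g4 //; case: ifP => _ //; rewrite mulr0 subr0.
- move=> c x h; rewrite btermE /=.
  transitivity ((clow f c x - cupp f c x + cbr f c * bcoef u beta c x)
                - b * (clow g c x - cupp g c x + cbr g c * bcoef u beta c x)); first ring.
  by move: (f5 c x h) (g5 c x h); rewrite !btermE => -> ->; rewrite mulr0 subr0.
Qed.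

Lemma relcyc_bridgeless f : relcyc f -> (forall t, cbr f t = 0) ->
  forall t x, clow f t x = 0 /\ cupp f t x = 0.
Proof.
case=> [low0 upp0 _ dot mid] br0.
have strand t x : (1 <= t <= m beta)%N -> cupp f t x = 0 -> clow f t x = 0.
  by move=> ht upp_t; have := mid t x ht; rewrite btermE br0 mul0r addr0 upp_t subr0.
suff above k t x : (m beta - k <= t)%N -> clow f t x = 0 /\ cupp f t x = 0.
  by move=> t x; apply: (above (m beta)); lia.
elim: k t x => [|k IH] t x ht.
all: have [t_in|t_out] := boolP (1 <= t <= m beta)%N; last by rewrite low0 ?upp0.
all: suff upp_t : cupp f t x = 0 by split => //; apply: strand.
- by rewrite dot // ifF //; lia.
- by rewrite dot //; case: ifP => // _; case: (IH t.+1 (sigma u beta t.+1 x) (ltac:(lia))).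
Qed.

Lemma sum_solid1 (F : nat -> int) j : solid j ->
  (forall c, solid c -> c != j -> F c = 0) ->
  \sum_(1 <= c < (m beta).+1 | solid c) F c = F j.
Proof.
move=> hj F0; have /andP [j_gt0 j_le_m] := solid_range hj.
have j_in : j \in index_iota 1 (m beta).+1 by rewrite mem_index_iota; lia.
rewrite big_mkcond (bigD1_seq j) ?iota_uniq //= hj big1 ?addr0 // => c hc.
by case: ifP => // hs; apply: F0.
Qed.

Lemma sum_solid_bump a j b (F : nat -> int) : solid j ->
  \sum_(1 <= c < (m beta).+1 | solid c) (a c + (c == j)%:R * b) * F c
  = \sum_(1 <= c < (m beta).+1 | solid c) a c * F c + b * F j.
Proof.
move=> hj; under eq_bigr do rewrite mulrDl.
rewrite big_split /= (@sum_solid1 (fun c => (c == j)%:R * b * F c) j) ?eqxx ?mul1r //.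
by move=> c _ /negPf ->; rewrite !mul0r.
Qed.

Lemma relcyc_span_below k f : relcyc f -> (forall t, (k < t)%N -> cbr f t = 0) ->
  exists a, chain_eq f (lincomb a).
Proof.
elim: k f => [|k IH] f hf hb.
  have br0 t : cbr f t = 0.
    by case: t => [|t]; [case: hf => _ _ br0 _ _; apply: br0 | exact: hb].
  have f0 := relcyc_bridgeless hf br0.
  exists (fun=> 0); split=> [c x|c x|c] /=; rewrite big1 => [|i _]; rewrite ?mul0r //.
  - by case: (f0 c x).
  - by case: (f0 c x).
have [hs|hns] := boolP (solid k.+1); last first.
  apply: IH => // t; rewrite leq_eqVlt => /orP [/eqP <-|]; last exact: hb.
  by case: hf => _ _ br0 _ _; apply: br0.
set b := cbr f k.+1.
have br_above t : (k < t)%N -> cbr (chain_subZ f b (Ccyc k.+1)) t = 0.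
  move=> ht; cbn [cbr chain_subZ]; rewrite Ccyc_cbr //.
  case: (eqVneq k.+1 t) => [<-|ne]; first by rewrite mulr1 subrr.
  by rewrite hb ?mulr0 ?subr0 //; lia.
have [a' [e1 e2 e3]] := IH _ (relcyc_subZ b hf (Ccyc_relcyc hbeta hs)) br_above.
exists (fun c => a' c + (c == k.+1)%:R * b).
split=> [c x|c x|c] /=; rewrite sum_solid_bump //.
- by move: (e1 c x) => /= <-; ring.
- by move: (e2 c x) => /= <-; ring.
- by move: (e3 c) => /= <-; ring.
Qed.

Lemma relcyc_span f : relcyc f -> exists a, chain_eq f (lincomb a).
Proof.
move=> hf; apply: (@relcyc_span_below (m beta)) => // t ht.
by case: hf => _ _ br0 _ _; apply: br0; apply/negP => /solid_range; lia.
Qed.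

Lemma lincomb_free a : chain_eq (lincomb a) (zero_chain n) -> forall c, solid c -> a c = 0.
Proof.
case=> _ _ br0.
have step c : solid c -> (forall c', solid c' -> (c < c')%N -> a c' = 0) -> a c = 0.
  move=> hc above; have := br0 c; cbn [cbr lincomb zero_chain].
  rewrite (@sum_solid1 _ c) //.
    by rewrite Ccyc_cbr // eqxx mulr1.
  move=> c' hc' /negPf ne; case: (ltngtP c' c) => [lt|gt|eq]; last by rewrite eq eqxx in ne.
  - by rewrite Ccyc_cbr ?ne ?mulr0 // ltnW.
  - by rewrite above ?mul0r.
suff above k c : solid c -> (m beta - k <= c)%N -> a c = 0.
  by move=> c hc; apply: (above (m beta)) => //; lia.
elim: k c => [|k IH] c hc hk; apply: step => // c' hc' lt.
  by have := solid_range hc'; lia.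
by apply: IH => //; lia.
Qed.

End Basis.

Theorem corollary5p11 (n : nat) (hn : (2 <= n)%N) (beta : seq int)
  (hbeta : all (valid_letter n) beta) (u : {perm 'I_n})
  (hu : u_le_beta u beta) :
  [/\ forall c, solid u beta c -> relcyc u beta (Ccyc u beta c),
      forall f, relcyc u beta f -> exists a : nat -> int, chain_eq f (lincomb u beta a)
    & forall a : nat -> int, chain_eq (lincomb u beta a) (zero_chain n) ->
        forall c, solid u beta c -> a c = 0%R].
Proof.
split; [exact: Ccyc_relcyc | exact: relcyc_span | exact: lincomb_free].
Qed.
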